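(* Let $(\mathfrak{X},\pi)$, $a$, $s$, $S$, $m$ and $\kappa$ be as in the context and assume (A), (B) and (C). Then \[ |m_x(z)|\sim 1\qquad\text{for all }x\in\mathfrak{X},\ z\in\mathbb{H},\ |z|\le 2\kappa, \] and \[ \operatorname{Im}m_x(z)\sim\operatorname{Im}m_y(z)\qquad\text{for all }x,y\in\mathfrak{X},\ z\in\mathbb{H},\ |z|\le2\kappa . \]
   Context: Let $(\mathfrak{X},\pi)$ be a measure space where $\pi$ is a probability measure; $\mathcal{B}(\mathfrak{X},\mathbb{D})$ denotes bounded measurable $\mathbb{D}$-valued functions with sup norm $\|\cdot\|$, and $\|T\|$ the induced operator norm; $\langle w\rangle=\int w_x\,\pi(\mathrm{d}x)$. Let $a\in\mathcal{B}(\mathfrak{X},\mathbb{R})$, $s\in\mathcal{B}(\mathfrak{X}^2,[0,\infty))$ symmetric, $(Sw)_x=\int s_{xy}w_y\,\pi(\mathrm{d}y)$, $S_x:=(y\mapsto s_{xy})$, and $\kappa:=\|a\|+2\|S\|^{1/2}$. $m:\mathbb{H}\to\mathcal{B}(\mathfrak{X},\mathbb{H})$ is the unique solution of $-1/m(z)=z+a+Sm(z)$, $z\in\mathbb{H}$ (upper half-plane). Comparison notation: for non-negative functions $\varphi,\psi$, $\varphi\lesssim\psi$ means $\varphi\le C\psi$ for a constant $0<C<\infty$ depending only on $s$ and $a$; $\varphi\sim\psi$ means $\varphi\lesssim\psi\lesssim\varphi$. Assumptions: (A) there is a symmetric $r\in\mathcal{B}(\mathfrak{X}^2,[0,\infty))$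 with $s_{xy}\ge\int r_{xu}r_{uy}\,\pi(\mathrm{d}u)$ and $\inf_x\int r_{xy}\,\pi(\mathrm{d}y)>0$. (B) There is $K\in\mathbb{N}$ with $\inf_{x,y}s^{(K)}_{xy}>0$, $s^{(K)}$ the kernel of $S^K$. (C) $\lim_{\varepsilon\downarrow0}\inf_{x}\int\frac{\pi(\mathrm{d}y)}{\varepsilon+(a_x-a_y)^2+\langle (S_x-S_y)^2\rangle}=\infty$. *)

From HB Require Import structures.
From mathcomp Require Import all_boot all_order all_algebra.
From mathcomp Require Import all_classical all_reals all_analysis.
From mathcomp Require Import complex.
Set Implicit Arguments. Unset Strict Implicit. Unset Printing Implicit Defensive.
Import Order.TTheory GRing.Theory Num.Theory.
Import numFieldNormedType.Exports.
Local Open Scope classical_set_scope.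
Local Open Scope ring_scope.

Section Defs.
Context (d : measure_display) (X : measurableType d) (R : realType)
  (P : probability X R).

Definition cabs (z : R[i]) : R := ComplexField.Normc.normc z.

Definition in_H (z : R[i]) : Prop := 0 < complex.Im z.

Definition bounded_meas (w : X -> R[i]) : Prop :=
  measurable_fun setT (fun x => complex.Re (w x)) /\
  measurable_fun setT (fun x => complex.Im (w x)) /\
  exists M : R, forall x, cabs (w x) <= M.

Definition supnorm (w : X -> R[i]) : R := sup (range (fun x => cabs (w x))).

Definition supnormR (f : X -> R) : R := sup (range (fun x => `|f x|)).

Definition cint (w : X -> R[i]) : R[i] :=
  Complex (Rintegral P setT (fun y => complex.Re (w y)))
          (Rintegral P setT (fun y => complex.Im (w y))).

Definition mean (f : X -> R) : R := Rintegral P setT f.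

Definition Sop (s : X -> X -> R) (w : X -> R[i]) (x : X) : R[i] :=
  cint (fun y => (s x y)%:C%C * w y).

Definition opnorm (s : X -> X -> R) : R :=
  sup [set supnorm (Sop s w) | w in
        [set w | bounded_meas w /\ supnorm w <= 1]].

Definition kappa (a : X -> R) (s : X -> X -> R) : R :=
  supnormR a + 2 * Num.sqrt (opnorm s).

(* kernel of S^(n+1): s^(1) = s, s^(k+1)_xy = \int s^(k)_xu s_uy pi(du) *)
Fixpoint kpow (s : X -> X -> R) (n : nat) : X -> X -> R :=
  match n with
  | O => s
  | n'.+1 => fun x y => Rintegral P setT (fun u => kpow s n' x u * s u y)
  end.

Definition good_kernel (s : X -> X -> R) : Prop :=
  measurable_fun setT (fun p : X * X => s p.1 p.2) /\
  (exists M : R, forall x y, `|s x y| <= M) /\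
  (forall x y, 0 <= s x y) /\ (forall x y, s x y = s y x).

Definition assumptionA (s : X -> X -> R) : Prop :=
  exists r : X -> X -> R, good_kernel r /\
    (forall x y, Rintegral P setT (fun u => r x u * r u y) <= s x y) /\
    (exists c : R, 0 < c /\ forall x, c <= Rintegral P setT (fun y => r x y)).

Definition assumptionB (s : X -> X -> R) : Prop :=
  exists K : nat, (0 < K)%N /\
    exists c : R, 0 < c /\ forall x y, c <= kpow s K.-1 x y.

(* Assumption (C): lim_{eps -> 0+} inf_x \int 1/(eps + (a_x-a_y)^2 + <(S_x-S_y)^2>) = oo *)
Definition assumptionC (a : X -> R) (s : X -> X -> R) : Prop :=
  forall M : R, exists delta : R, 0 < delta /\
    forall eps : R, 0 < eps -> eps < delta -> forall x : X,
      (M%:E <= \int[P]_(y in setT)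
         ((eps + (a x - a y) ^+ 2
               + mean (fun u => (s x u - s y u) ^+ 2))^-1)%:E)%E.

End Defs.

(* Write [w = m(z)]. The real and imaginary parts of the equation read
   [1 / |w_x|^2 = (Re z + a_x + (S Re w)_x)^2 + (Im z + (S Im w)_x)^2] and
   [Im w_x = |w_x|^2 (Im z + (S Im w)_x)].  Assumption (A) and the Cauchy-Schwarz
   inequality give [<|w|^2> <= 1 / c^2] uniformly in [z].  Comparing the first identity
   at [x] and [y] gives [(1 / |w_x|^2 + (a_x - a_y)^2 + <(S_x - S_y)^2>)^-1 <~ |w_y|^2];
   integrating in [y], assumption (C) forbids [|w_x|] to be large.  For [|z| <= 2 kappa]
   the first identity then bounds [|w|] from below.  Finally [Im w >~ S Im w] iterates to
   [Im w_y >~ (S^K Im w)_y >~ <Im w>] by (B), while [Im w_x <~ Im z + <Im w>] and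
   [Im z <~ Im w_y]. *)

From HB Require Import structures.
From mathcomp Require Import all_boot all_order all_algebra.
From mathcomp Require Import all_classical all_reals all_analysis.
From mathcomp Require Import complex measurable_realfun lra ring.
Import Order.TTheory GRing.Theory Num.Theory.
Import numFieldNormedType.Exports.
Local Open Scope classical_set_scope.
Local Open Scope ring_scope.

Set Implicit Arguments.
Unset Strict Implicit.
Unset Printing Implicit Defensive.

Section bounded_measurable.
Context {d : measure_display} {X : measurableType d} {R : realType}.
Implicit Types f g : X -> R.

Definition bmeas f := measurable_fun setT f /\ exists M : R, forall x, `|f x| <= M.

Lemma bmeas_cst (r : R) : bmeas (fun=> r).
Proof. by split; [exact: measurable_cst|exists `|r|]. Qed.

Lemma bmeasD f g : bmeas f -> bmeas g -> bmeas (fun x => f x + g x).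
Proof.
move=> [mf [M hM]] [mg [N hN]]; split; first exact: measurable_funD.
by exists (M + N) => x; rewrite (le_trans (ler_normD _ _))// lerD.
Qed.

Lemma bmeasN f : bmeas f -> bmeas (fun x => - f x).
Proof.
by move=> [mf [M hM]]; split; [exact: measurable_funN|exists M => x; rewrite normrN].
Qed.

Lemma bmeasB f g : bmeas f -> bmeas g -> bmeas (fun x => f x - g x).
Proof. by move=> hf hg; apply: bmeasD => //; exact: bmeasN. Qed.

Lemma bmeasM f g : bmeas f -> bmeas g -> bmeas (fun x => f x * g x).
Proof.
move=> [mf [M hM]] [mg [N hN]]; split; first exact: measurable_funM.
by exists (M * N) => x; rewrite normrM ler_pM.
Qed.

Lemma bmeasZ (k : R) f : bmeas f -> bmeas (fun x => k * f x).
Proof. by move=> hf; apply: bmeasM => //; exact: bmeas_cst. Qed.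

Lemma bmeas_sqr f : bmeas f -> bmeas (fun x => f x ^+ 2).
Proof. by move=> hf; under eq_fun do rewrite expr2; exact: bmeasM. Qed.

Lemma bmeas_norm f : bmeas f -> bmeas (fun x => `|f x|).
Proof.
move=> [mf [M hM]]; split; first exact: measurableT_comp.
by exists M => x; rewrite normr_id.
Qed.

End bounded_measurable.

Section probability_Rintegral.
Context {d : measure_display} {X : measurableType d} {R : realType}
  {P : probability X R}.
Local Notation I f := (Rintegral P setT f).
Implicit Types f g : X -> R.

Lemma bmeas_integrable f : bmeas f -> P.-integrable setT (EFin \o f).
Proof.
move=> [mf [M hM]]; apply: measurable_bounded_integrable => //.
  by apply: (le_lt_trans (probability_le1 P measurableT)); exact: ltry.
exists M; split; first exact: num_real.
by move=> N MN x _; rewrite /= (le_trans (hM x))// ltW.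
Qed.

Lemma bmeas_RintegralE f : bmeas f -> (I f)%:E = (\int[P]_x (f x)%:E)%E.
Proof.
move=> bf; rewrite /Rintegral fineK//.
by have := integrable_fin_num measurableT (bmeas_integrable bf).
Qed.

Lemma Rintegral_cst1 (r : R) : I (fun=> r) = r.
Proof.
rewrite Rintegral_cst//; have -> : fine (P setT) = 1 by rewrite probability_setT.
exact: mulr1.
Qed.

Lemma bmeas_RintegralD f g : bmeas f -> bmeas g -> I (fun x => f x + g x) = I f + I g.
Proof. by move=> bf bg; apply: RintegralD => //; exact: bmeas_integrable. Qed.

Lemma bmeas_RintegralB f g : bmeas f -> bmeas g -> I (fun x => f x - g x) = I f - I g.
Proof. by move=> bf bg; apply: RintegralB => //; exact: bmeas_integrable. Qed.

Lemma bmeas_RintegralZl (k : R) f : bmeas f -> I (fun x => k * f x) = k * I f.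
Proof. by move=> bf; apply: RintegralZl => //; exact: bmeas_integrable. Qed.

Lemma bmeas_RintegralZr (k : R) f : bmeas f -> I (fun x => f x * k) = I f * k.
Proof.
by move=> bf; rewrite mulrC -bmeas_RintegralZl//; apply: eq_Rintegral => x _; rewrite mulrC.
Qed.

Lemma bmeas_le_Rintegral f g : bmeas f -> bmeas g -> (forall x, f x <= g x) -> I f <= I g.
Proof. by move=> bf bg fg; apply: le_Rintegral => //; exact: bmeas_integrable. Qed.

Lemma bmeas_normr_Rintegral f : bmeas f -> `|I f| <= I (fun x => `|f x|).
Proof. by move=> bf; apply: le_normr_Rintegral => //; exact: bmeas_integrable. Qed.

Lemma normr_Rintegral_le f (M : R) : measurable_fun setT f ->
  (forall x, `|f x| <= M) -> `|I f| <= M.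
Proof.
move=> mf hM; have bf : bmeas f by split; last exists M.
apply: (le_trans (bmeas_normr_Rintegral bf)); rewrite -[leRHS]Rintegral_cst1.
by apply: bmeas_le_Rintegral => //; [exact: bmeas_norm|exact: bmeas_cst].
Qed.

Lemma ge0_le_integral_any (f g : X -> \bar R) :
  (forall x, 0 <= f x)%E -> (forall x, f x <= g x)%E ->
  (\int[P]_x f x <= \int[P]_x g x)%E.
Proof.
move=> f0 fg; have g0 x : (0 <= g x)%E by exact: le_trans (f0 x) (fg x).
rewrite !ge0_integralTE//; apply: le_ereal_sup => _ [h hf <-]; exists h => //.
by move=> x; exact: le_trans (hf x) (fg x).
Qed.

End probability_Rintegral.

Section kernels.
Context {d : measure_display} {X : measurableType d} {R : realType}
  {P : probability X R}.
Local Notation I f := (Rintegral P setT f).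
Implicit Types F G : X -> X -> R.

Definition kmeas F := measurable_fun setT (fun p : X * X => F p.1 p.2).

Definition kbounded F := exists M : R, forall x y, 0 <= F x y <= M.

Lemma kmeas_sectionl F x : kmeas F -> measurable_fun setT (F x).
Proof. exact: measurable_fun_pair2. Qed.

Lemma kmeas_sectionr F y : kmeas F -> measurable_fun setT (fun x => F x y).
Proof. exact: measurable_fun_pair1. Qed.

Lemma kmeas_fst (f : X -> R) : measurable_fun setT f -> kmeas (fun x _ => f x).
Proof. by move=> mf; exact: measurableT_comp mf measurable_fst. Qed.

Lemma kmeas_snd (f : X -> R) : measurable_fun setT f -> kmeas (fun _ y => f y).
Proof. by move=> mf; exact: measurableT_comp mf measurable_snd. Qed.

Lemma kmeas_swap F : kmeas F -> kmeas (fun x y => F y x).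
Proof. by move=> mF; have := measurableT_comp mF (@measurable_swap _ _ X X). Qed.

Lemma kmeasM F G : kmeas F -> kmeas G -> kmeas (fun x y => F x y * G x y).
Proof. exact: measurable_funM. Qed.

Lemma kbounded_swap F : kbounded F -> kbounded (fun x y => F y x).
Proof. by case=> M hM; exists M => x y; exact: hM. Qed.

Lemma kbounded_fst (f : X -> R) M : (forall x, 0 <= f x <= M) -> kbounded (fun x _ => f x).
Proof. by move=> f_bnd; exists M => x _; exact: f_bnd. Qed.

Lemma kbounded_snd (f : X -> R) M : (forall y, 0 <= f y <= M) -> kbounded (fun _ y => f y).
Proof. by move=> f_bnd; exists M => _ y; exact: f_bnd. Qed.

Lemma kboundedM F G : kbounded F -> kbounded G -> kbounded (fun x y => F x y * G x y).
Proof.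
move=> [M hM] [N hN]; exists (M * N) => x y.
by have /andP[F0 FM] := hM x y; have /andP[G0 GN] := hN x y; rewrite mulr_ge0//= ler_pM.
Qed.

Lemma kmeas_EFin F : kmeas F -> measurable_fun setT (fun p : X * X => (F p.1 p.2)%:E).
Proof. by move=> mF; exact/measurable_EFinP. Qed.

Lemma kbounded_EFin_ge0 F : kbounded F -> forall p : X * X, (0 <= (F p.1 p.2)%:E)%E.
Proof. by case=> M hM p; have /andP[] := hM p.1 p.2; rewrite lee_fin. Qed.

Lemma kbounded_bmeasl F x : kmeas F -> kbounded F -> bmeas (F x).
Proof.
move=> mF [M hM]; split; first exact: kmeas_sectionl.
by exists M => y; have /andP[F0 FM] := hM x y; rewrite ger0_norm.
Qed.

Lemma kbounded_bmeasr F y : kmeas F -> kbounded F -> bmeas (fun x => F x y).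
Proof. by move=> mF bF; exact: kbounded_bmeasl y (kmeas_swap mF) (kbounded_swap bF). Qed.

Lemma bmeas_Rintegral_section F : kmeas F -> kbounded F -> bmeas (fun x => I (F x)).
Proof.
move=> mF bF; split.
  apply/measurable_EFinP.
  have := @measurable_fun_fubini_tonelli_F _ _ X X R P _ (kmeas_EFin mF)
    (kbounded_EFin_ge0 bF).
  congr measurable_fun; apply/funext => x /=.
  by rewrite bmeas_RintegralE//; exact: kbounded_bmeasl.
have [M hM] := bF; exists M => x; apply: normr_Rintegral_le; first exact: kmeas_sectionl.
by move=> y; have /andP[F0 FM] := hM x y; rewrite ger0_norm.
Qed.

Lemma Rintegral_swap F : kmeas F -> kbounded F ->
  I (fun x => I (F x)) = I (fun y => I (fun x => F x y)).
Proof.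
move=> mF bF; have mG := kmeas_swap mF; have bG := kbounded_swap bF.
apply: EFin_inj.
rewrite !bmeas_RintegralE; [|exact: bmeas_Rintegral_section|exact: bmeas_Rintegral_section].
transitivity (\int[P]_x \int[P]_y (F x y)%:E)%E.
  by apply: eq_integral => x _; rewrite bmeas_RintegralE//; exact: kbounded_bmeasl.
transitivity (\int[P]_y \int[P]_x (F x y)%:E)%E.
  have mF' := kmeas_EFin mF; have F0 := kbounded_EFin_ge0 bF.
  exact: (sfinite_Fubini P P (fun p : X * X => (F p.1 p.2)%:E)).
by apply: eq_integral => y _; rewrite bmeas_RintegralE//; exact: kbounded_bmeasr.
Qed.

End kernels.

Section amgm.
Variable R : realFieldType.
Implicit Types t u v A B : R.

Lemma sqr_le_of_amgm u A B : 0 <= u -> 0 <= A -> 0 <= B ->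
  (forall t, 0 < t -> u <= (t * A + B / t) / 2) -> u ^+ 2 <= A * B.
Proof.
move=> u0 A0 B0 h.
have [->|u_neq0] := eqVneq u 0; first by rewrite expr0n /= mulr_ge0.
have u_gt0 : 0 < u by rewrite lt_def u_neq0 u0.
have [A_eq0|A_neq0] := eqVneq A 0.
  have := h ((B + 1) / u) (divr_gt0 (ltr_pwDr ltr01 B0) u_gt0).
  rewrite A_eq0 mulr0 add0r invf_div => hu.
  have : B * (u / (B + 1)) <= u.
    rewrite mulrA ler_pdivrMr ?ltr_pwDr// mulrDr mulr1 mulrC lerDl; exact: ltW.
  lra.
have A_gt0 : 0 < A by rewrite lt_def A_neq0 A0.
have := h (u / A) (divr_gt0 u_gt0 A_gt0).
rewrite divfK// invf_div mulrA [B * A]mulrC => hu.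
have -> : A * B = (A * B / u) * u by rewrite divfK// gt_eqF.
by rewrite expr2 ler_pM2r//; lra.
Qed.

Lemma mul_le_amgm t u v : 0 < t -> u * v <= t / 2 * u ^+ 2 + 1 / (2 * t) * v ^+ 2.
Proof.
move=> t0.
have h : 2 * t * (u * v) <= t ^+ 2 * u ^+ 2 + v ^+ 2.
  have := sqr_ge0 (t * u - v); rewrite sqrrB exprMn; lra.
have -> : t / 2 * u ^+ 2 + 1 / (2 * t) * v ^+ 2 = (t ^+ 2 * u ^+ 2 + v ^+ 2) / (2 * t).
  by field; rewrite gt_eqF.
rewrite ler_pdivlMr ?mulr_gt0//; lra.
Qed.

Lemma one_le_amgm t v : 0 < t -> 0 < v -> 1 <= t / 2 * v^-1 + 1 / (2 * t) * v.
Proof.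
move=> t0 v0; rewrite -subr_ge0.
have -> : t / 2 * v^-1 + 1 / (2 * t) * v - 1 = (t - v) ^+ 2 / (2 * t * v).
  by field; rewrite !gt_eqF.
by rewrite divr_ge0 ?sqr_ge0// !mulr_ge0// ltW.
Qed.

Lemma sqrD_le u v : (u + v) ^+ 2 <= 2 * u ^+ 2 + 2 * v ^+ 2.
Proof. have := sqr_ge0 (u - v); rewrite sqrrB sqrrD; lra. Qed.

Lemma sqrD3_le t u v : (t + u + v) ^+ 2 <= 2 * t ^+ 2 + 4 * u ^+ 2 + 4 * v ^+ 2.
Proof. have := sqrD_le t (u + v); have := sqrD_le u v; rewrite -addrA; lra. Qed.

Lemma sqr_le_of_normr_le u A : `|u| <= A -> u ^+ 2 <= A ^+ 2.
Proof. by move=> /ler_normlP [h1 h2]; nra. Qed.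

Lemma normr_le_of_sqr_le u v A : u ^+ 2 + v ^+ 2 <= A -> `|u| <= 1 + A.
Proof.
have := sqr_ge0 (`|u| - 1); rewrite sqrrB mulr1 expr1n real_normK ?num_real//.
have := sqr_ge0 u; have := sqr_ge0 v; lra.
Qed.

End amgm.

Section cauchy_schwarz.
Context {d : measure_display} {X : measurableType d} {R : realType}
  {P : probability X R}.
Local Notation I f := (Rintegral P setT f).
Implicit Types f g h : X -> R.

Lemma Rintegral_cauchy_schwarz f g : bmeas f -> bmeas g ->
  (I (fun x => f x * g x)) ^+ 2 <= I (fun x => f x ^+ 2) * I (fun x => g x ^+ 2).
Proof.
move=> bf bg; rewrite -real_normK ?num_real//.
have bfg := bmeasM bf bg; have bf2 := bmeas_sqr bf; have bg2 := bmeas_sqr bg.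
have I2_ge0 k : 0 <= I (fun x => k x ^+ 2) by apply: Rintegral_ge0 => x _; exact: sqr_ge0.
apply: sqr_le_of_amgm (normr_ge0 _) (I2_ge0 f) (I2_ge0 g) _ => t t0.
apply: (le_trans (bmeas_normr_Rintegral bfg)).
have -> : (t * I (fun x => f x ^+ 2) + I (fun x => g x ^+ 2) / t) / 2 =
    I (fun x => t / 2 * f x ^+ 2 + 1 / (2 * t) * g x ^+ 2).
  rewrite (bmeas_RintegralD (bmeasZ _ bf2) (bmeasZ _ bg2)) !bmeas_RintegralZl//.
  by field; rewrite gt_eqF.
apply: bmeas_le_Rintegral; [exact: bmeas_norm|exact: bmeasD (bmeasZ _ _) (bmeasZ _ _)|].
move=> x; rewrite normrM -(real_normK (num_real (f x))) -(real_normK (num_real (g x))).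
exact: mul_le_amgm.
Qed.

Lemma Rintegral_weighted_cauchy_schwarz f h : bmeas f -> bmeas h ->
  bmeas (fun x => (h x)^-1) -> (forall x, 0 <= f x) -> (forall x, 0 < h x) ->
  (I f) ^+ 2 <= I (fun x => f x / h x) * I (fun x => f x * h x).
Proof.
move=> bf bh bhV f0 h0.
have bfV := bmeasM bf bhV; have bfh := bmeasM bf bh.
have If_ge0 : 0 <= I f by apply: Rintegral_ge0 => x _.
have IfV_ge0 : 0 <= I (fun x => f x / h x).
  by apply: Rintegral_ge0 => x _; rewrite divr_ge0// ltW.
have Ifh_ge0 : 0 <= I (fun x => f x * h x).
  by apply: Rintegral_ge0 => x _; rewrite mulr_ge0// ltW.
apply: sqr_le_of_amgm If_ge0 IfV_ge0 Ifh_ge0 _ => t t0.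
have -> : (t * I (fun x => f x / h x) + I (fun x => f x * h x) / t) / 2 =
    I (fun x => t / 2 * (f x / h x) + 1 / (2 * t) * (f x * h x)).
  rewrite (bmeas_RintegralD (bmeasZ _ bfV) (bmeasZ _ bfh)) !bmeas_RintegralZl//.
  by field; rewrite gt_eqF.
apply: bmeas_le_Rintegral => // [|x]; first exact: bmeasD (bmeasZ _ _) (bmeasZ _ _).
have -> : t / 2 * (f x / h x) + 1 / (2 * t) * (f x * h x) =
    f x * (t / 2 * (h x)^-1 + 1 / (2 * t) * h x) by ring.
by rewrite ler_peMr// one_le_amgm.
Qed.

End cauchy_schwarz.

Section complex_parts.
Variable R : realType.
Implicit Types (r : R) (u w : R[i]).

Lemma Re_scale r w : complex.Re (r%:C%C * w) = r * complex.Re w.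
Proof. by case: w => u v /=; ring. Qed.

Lemma Im_scale r w : complex.Im (r%:C%C * w) = r * complex.Im w.
Proof. by case: w => u v /=; ring. Qed.

Lemma Re_oppV w :
  complex.Re (- w^-1) = - complex.Re w / (complex.Re w ^+ 2 + complex.Im w ^+ 2).
Proof. by case: w => u v /=; rewrite mulNr. Qed.

Lemma Im_oppV w :
  complex.Im (- w^-1) = complex.Im w / (complex.Re w ^+ 2 + complex.Im w ^+ 2).
Proof. by case: w => u v /=; rewrite opprK. Qed.

Lemma ReD u w : complex.Re (u + w) = complex.Re u + complex.Re w.
Proof. by case: u; case: w. Qed.

Lemma ImD u w : complex.Im (u + w) = complex.Im u + complex.Im w.
Proof. by case: u; case: w. Qed.

Lemma cabsE w : cabs w = Num.sqrt (complex.Re w ^+ 2 + complex.Im w ^+ 2).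
Proof. by case: w. Qed.

Lemma normr_Re_le_cabs w : `|complex.Re w| <= cabs w.
Proof. by rewrite cabsE -sqrtr_sqr ler_wsqrtr// lerDl sqr_ge0. Qed.

Lemma normr_Im_le_cabs w : `|complex.Im w| <= cabs w.
Proof. by rewrite cabsE -sqrtr_sqr ler_wsqrtr// lerDr sqr_ge0. Qed.

End complex_parts.

Section kernel_powers.
Context {d : measure_display} {X : measurableType d} {R : realType}
  (P : probability X R).
Variables (s : X -> X -> R) (sig : R).
Hypotheses (ms : kmeas s) (s_bnd : forall x y, 0 <= s x y <= sig).

Let s_kbounded : kbounded s. Proof. by exists sig. Qed.

Lemma kpow_meas_bound n : (forall x, measurable_fun setT (kpow P s n x)) /\
  (forall x y, 0 <= kpow P s n x y <= sig ^+ n.+1).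
Proof.
elim: n => [|n [mk bk]]; first by split => [x|x y]; [exact: kmeas_sectionl|rewrite expr1].
have mF x : kmeas (fun y u => kpow P s n x u * s u y).
  by apply: kmeasM; [exact: kmeas_snd|exact: kmeas_swap].
have bF x : kbounded (fun y u => kpow P s n x u * s u y).
  exact: kboundedM (kbounded_snd (bk x)) (kbounded_swap s_kbounded).
split => [x|x y]; first exact: (bmeas_Rintegral_section (mF x) (bF x)).1.
rewrite /= exprS mulrC; apply/andP; split.
  apply: Rintegral_ge0 => u _.
  by have /andP[k0 _] := bk x u; have /andP[s0 _] := s_bnd u y; exact: mulr_ge0.
apply: le_trans (ler_norm _) _; apply: normr_Rintegral_le.
  by apply: measurable_funM; [exact: mk|exact: kmeas_sectionr].
move=> u; have /andP[k0 kM] := bk x u; have /andP[s0 sM] := s_bnd u y.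
by rewrite ger0_norm ?mulr_ge0// ler_pM.
Qed.

Lemma bmeas_kpow n x : bmeas (kpow P s n x).
Proof.
have [mk bk] := kpow_meas_bound n; split; first exact: mk.
by exists (sig ^+ n.+1) => y; have /andP[k0 kM] := bk x y; rewrite ger0_norm.
Qed.

End kernel_powers.

Lemma measurable_inv_max (R : realType) (m : R) : 0 < m ->
  measurable_fun setT (fun t : R => (Num.max t m)^-1).
Proof.
move=> m_gt0; apply: continuous_measurable_fun => t.
have max_cont : {for t, continuous (fun u : R => Num.max u m)}.
  apply: (@continuous_max _ _ id (fun=> m)); first by move=> ?; exact: cvg_id.
  exact: cst_continuous.
have max_neq0 : Num.max t m != 0 by rewrite gt_eqF// (lt_le_trans m_gt0)// le_max lexx orbT.
exact: (@continuousV _ _ (fun u => Num.max u m) t max_neq0 max_cont).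
Qed.

(* A bound on [1 / |w|^2] from the equation, when [|z| <= k], [|a| <= Ma], [s <= sig]
   and [|Re w|, Im w <= M]. *)
Definition qve_bound (R : realFieldType) (Ma sig k M : R) : R :=
  (k + Ma + sig * M) ^+ 2 + (k + sig * M) ^+ 2 + 1.

Lemma qve_bound_ge1 (R : realFieldType) (Ma sig k M : R) : 1 <= qve_bound Ma sig k M.
Proof.
by rewrite /qve_bound; have := sqr_ge0 (k + Ma + sig * M); have := sqr_ge0 (k + sig * M); lra.
Qed.

(* [Kq] bounds [|w|^2] and [L] bounds [1 / |w|^2]; [L ^+ K / cB] comes from (B). *)
Definition qve_const (R : realFieldType) (sig Kq L cB : R) (K : nat) : R :=
  1 + Kq + L + Kq * (L + sig * L ^+ K / cB).

Lemma qve_const_ge (R : realFieldType) (sig Kq L cB : R) (K : nat) :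
  0 <= sig -> 0 <= Kq -> 1 <= L -> 0 < cB ->
  [/\ 1 <= qve_const sig Kq L cB K, Kq <= qve_const sig Kq L cB K,
      L <= qve_const sig Kq L cB K & Kq * (L + sig * L ^+ K / cB) <= qve_const sig Kq L cB K].
Proof.
move=> sig_ge0 Kq_ge0 L_ge1 cB_gt0; have L_ge0 : 0 <= L by exact: le_trans ler01 L_ge1.
have : 0 <= Kq * (L + sig * L ^+ K / cB).
  by rewrite mulr_ge0// addr_ge0// divr_ge0 ?mulr_ge0 ?exprn_ge0// ltW.
by rewrite /qve_const; split; lra.
Qed.

Section qve_solution.
Context {d : measure_display} {X : measurableType d} {R : realType}
  (P : probability X R).
Local Notation I f := (Rintegral P setT f).
Variables (a : X -> R) (s : X -> X -> R) (Ma sig : R).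
Hypotheses (a_le : forall x, `|a x| <= Ma) (ms : kmeas s)
  (s_bnd : forall x y, 0 <= s x y <= sig).
Variables (z : R[i]) (w : X -> R[i]) (Mw : R).
Hypotheses (Im_z_gt0 : 0 < complex.Im z)
  (mwr : measurable_fun setT (fun x => complex.Re (w x)))
  (mwi : measurable_fun setT (fun x => complex.Im (w x)))
  (w_le : forall x, cabs (w x) <= Mw)
  (Im_w_gt0 : forall x, 0 < complex.Im (w x))
  (qve : forall x, - (w x)^-1 = z + (a x)%:C%C + Sop P s w x).

Let wr x := complex.Re (w x).
Let wi x := complex.Im (w x).
Let w2 x := wr x ^+ 2 + wi x ^+ 2.
Let Swr x := I (fun y => s x y * wr y).
Let Swi x := I (fun y => s x y * wi y).

Let s_kbounded : kbounded s. Proof. by exists sig. Qed.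

Lemma sig_ge0 : 0 <= sig.
Proof. by have /andP[s0 sM] := s_bnd point point; exact: le_trans sM. Qed.

Lemma normr_wr_le x : `|wr x| <= Mw.
Proof. exact: le_trans (normr_Re_le_cabs _) (w_le x). Qed.

Lemma wi_le x : wi x <= Mw.
Proof. exact: le_trans (ler_norm _) (le_trans (normr_Im_le_cabs _) (w_le x)). Qed.

Lemma wi_ge0 x : 0 <= wi x.
Proof. exact: ltW (Im_w_gt0 x). Qed.

Lemma wi_bnd x : 0 <= wi x <= Mw.
Proof. by rewrite wi_ge0 wi_le. Qed.

Lemma bmeas_wr : bmeas wr.
Proof. by split => //; exists Mw; exact: normr_wr_le. Qed.

Lemma bmeas_wi : bmeas wi.
Proof. by split => //; exists Mw => x; rewrite ger0_norm ?wi_ge0 ?wi_le. Qed.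

Lemma bmeas_w2 : bmeas w2.
Proof. exact: bmeasD (bmeas_sqr bmeas_wr) (bmeas_sqr bmeas_wi). Qed.

Lemma bmeas_s x : bmeas (s x).
Proof. exact: kbounded_bmeasl. Qed.

Lemma bmeas_Swi : bmeas Swi.
Proof.
apply: bmeas_Rintegral_section; first exact: kmeasM ms (kmeas_snd mwi).
exact: kboundedM s_kbounded (kbounded_snd wi_bnd).
Qed.

Lemma w2_gt0 x : 0 < w2 x.
Proof. by have := exprn_gt0 2 (Im_w_gt0 x); have := sqr_ge0 (wr x); rewrite /w2; lra. Qed.

Lemma qve_Re x : complex.Re z + a x + Swr x = - wr x / w2 x.
Proof.
have := congr1 (@complex.Re R) (qve x); rewrite Re_oppV !ReD /= => ->.
by congr (_ + _); apply: eq_Rintegral => y _; rewrite Re_scale.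
Qed.

Lemma qve_Im x : complex.Im z + Swi x = wi x / w2 x.
Proof.
have := congr1 (@complex.Im R) (qve x); rewrite Im_oppV !ImD /= addr0 => ->.
by congr (_ + _); apply: eq_Rintegral => y _; rewrite Im_scale.
Qed.

Lemma inv_w2E x :
  1 / w2 x = (complex.Re z + a x + Swr x) ^+ 2 + (complex.Im z + Swi x) ^+ 2.
Proof. by rewrite qve_Re qve_Im; have := w2_gt0 x; rewrite /w2 => ?; field; rewrite gt_eqF. Qed.

Lemma wiE x : wi x = w2 x * (complex.Im z + Swi x).
Proof. by rewrite qve_Im mulrC divfK// gt_eqF// w2_gt0. Qed.

Lemma Swi_ge0 x : 0 <= Swi x.
Proof.
by apply: Rintegral_ge0 => y _; have /andP[s0 _] := s_bnd x y; rewrite mulr_ge0 ?wi_ge0.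
Qed.

Lemma w2_Swi_le x : w2 x * Swi x <= wi x.
Proof.
by rewrite [leRHS]wiE mulrDr lerDr mulr_ge0// ltW ?w2_gt0.
Qed.

Lemma Swi_le B : (forall y, wi y <= B) -> forall x, Swi x <= sig * B.
Proof.
move=> wi_leB x; apply: le_trans (ler_norm _) _; apply: normr_Rintegral_le.
  by apply: measurable_funM => //; exact: kmeas_sectionl.
move=> y; have /andP[s0 sM] := s_bnd x y.
by rewrite normrM !ger0_norm ?wi_ge0// ler_pM ?wi_ge0 ?wi_leB.
Qed.

Lemma normr_Swr_le B : (forall y, `|wr y| <= B) -> forall x, `|Swr x| <= sig * B.
Proof.
move=> wr_leB x; apply: normr_Rintegral_le.
  by apply: measurable_funM => //; exact: kmeas_sectionl.
move=> y; have /andP[s0 sM] := s_bnd x y.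
by rewrite normrM ger0_norm// ler_pM ?wr_leB.
Qed.

Lemma w2_ge k M : cabs z <= k -> (forall y, `|wr y| <= M) -> (forall y, wi y <= M) ->
  forall x, 1 / qve_bound Ma sig k M <= w2 x.
Proof.
move=> z_le wr_le wi_leM x.
have L_gt0 : 0 < qve_bound Ma sig k M := lt_le_trans ltr01 (qve_bound_ge1 _ _ _ _).
have w2x := w2_gt0 x.
have hRe : `|complex.Re z + a x + Swr x| <= k + Ma + sig * M.
  rewrite (le_trans (ler_normD _ _))// lerD//; last exact: normr_Swr_le.
  by rewrite (le_trans (ler_normD _ _))// lerD// (le_trans (normr_Re_le_cabs z)).
have hIm : `|complex.Im z + Swi x| <= k + sig * M.
  rewrite ger0_norm ?addr_ge0 ?Swi_ge0 ?(ltW Im_z_gt0)// lerD//; last exact: Swi_le.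
  exact: le_trans (ler_norm _) (le_trans (normr_Im_le_cabs z) z_le).
have : 1 / w2 x <= qve_bound Ma sig k M.
  rewrite inv_w2E /qve_bound.
  by have := sqr_le_of_normr_le hRe; have := sqr_le_of_normr_le hIm; lra.
by rewrite ler_pdivrMr// mulrC -ler_pdivrMr.
Qed.

Lemma w2_ge_of_le k Kq : cabs z <= k -> (forall y, w2 y <= Kq) ->
  forall x, 1 / qve_bound Ma sig k (1 + Kq) <= w2 x.
Proof.
move=> z_le w2_le; apply: w2_ge => // y; first exact: normr_le_of_sqr_le (w2_le y).
by apply: le_trans (ler_norm _) _; apply: normr_le_of_sqr_le; rewrite addrC; exact: w2_le.
Qed.

Lemma Im_z_le L : 0 < L -> (forall x, 1 / L <= w2 x) -> forall y, complex.Im z <= L * wi y.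
Proof.
move=> L_gt0 w2_geL y.
have : 1 / L * complex.Im z <= wi y.
  rewrite wiE; apply: le_trans (ler_wpM2r (ltW Im_z_gt0) (w2_geL y)) _.
  by rewrite mulrDr lerDl mulr_ge0 ?Swi_ge0// ltW ?w2_gt0.
by rewrite mul1r -ler_pdivlMl ?invr_gt0// invrK.
Qed.

Let wi_min := complex.Im z / qve_bound Ma sig (cabs z) Mw.

Lemma wi_min_gt0 : 0 < wi_min.
Proof. by rewrite divr_gt0// (lt_le_trans ltr01 (qve_bound_ge1 _ _ _ _)). Qed.

Lemma wi_ge_min x : wi_min <= wi x.
Proof.
have L_gt0 := lt_le_trans ltr01 (qve_bound_ge1 Ma sig (cabs z) Mw).
rewrite /wi_min ler_pdivrMr// mulrC; apply: Im_z_le => // y.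
exact: w2_ge (lexx _) normr_wr_le wi_le y.
Qed.

Section assumptionA.
Variables (r : X -> X -> R) (rM c : R).
Hypotheses (mr : kmeas r) (r_bnd : forall x y, 0 <= r x y <= rM)
  (r_sym : forall x y, r x y = r y x)
  (r2_le_s : forall x y, I (fun u => r x u * r u y) <= s x y)
  (c_gt0 : 0 < c) (r_mass : forall x, c <= I (r x)).

Let r_kbounded : kbounded r. Proof. by exists rM. Qed.

Let Rwi x := I (fun u => r x u * wi u).

Lemma bmeas_Rwi : bmeas Rwi.
Proof.
apply: bmeas_Rintegral_section; first exact: kmeasM mr (kmeas_snd mwi).
exact: kboundedM r_kbounded (kbounded_snd wi_bnd).
Qed.

Lemma Rwi_ge x : c * wi_min <= Rwi x.
Proof.
have br := kbounded_bmeasl x mr r_kbounded.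
apply: (@le_trans _ _ (I (fun u => wi_min * r x u))).
  by rewrite bmeas_RintegralZl// mulrC ler_wpM2l ?r_mass// ltW ?wi_min_gt0.
apply: bmeas_le_Rintegral => [||u]; [exact: bmeasZ|exact: bmeasM br bmeas_wi|].
by have /andP[r0 _] := r_bnd x u; rewrite mulrC ler_wpM2l ?wi_ge_min.
Qed.

Lemma Rwi_gt0 x : 0 < Rwi x.
Proof. exact: lt_le_trans (mulr_gt0 c_gt0 wi_min_gt0) (Rwi_ge x). Qed.

Lemma invRwi_bnd x : 0 <= (Rwi x)^-1 <= (c * wi_min)^-1.
Proof.
have Rwix := Rwi_gt0 x; have m_gt0 : 0 < c * wi_min by rewrite mulr_gt0 ?wi_min_gt0.
by rewrite invr_ge0 (ltW Rwix)/= lef_pV2 ?posrE ?Rwi_ge.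
Qed.

Lemma measurable_invRwi : measurable_fun setT (fun x => (Rwi x)^-1).
Proof.
have m_gt0 : 0 < c * wi_min by rewrite mulr_gt0 ?wi_min_gt0.
have -> : (fun x => (Rwi x)^-1) = (fun x => (Num.max (Rwi x) (c * wi_min))^-1).
  by apply/funext => x; rewrite max_l ?Rwi_ge.
exact: measurableT_comp (measurable_inv_max m_gt0) bmeas_Rwi.1.
Qed.

Lemma bmeas_invRwi : bmeas (fun x => (Rwi x)^-1).
Proof.
split; first exact: measurable_invRwi.
by exists (c * wi_min)^-1 => x; have /andP[V0 VM] := invRwi_bnd x; rewrite ger0_norm.
Qed.

Lemma R_Rwi_le_Swi y : I (fun u => r y u * Rwi u) <= Swi y.
Proof.
have mF : kmeas (fun u t => r y u * (r u t * wi t)).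
  exact: kmeasM (kmeas_fst (kmeas_sectionl y mr)) (kmeasM mr (kmeas_snd mwi)).
have bF : kbounded (fun u t => r y u * (r u t * wi t)).
  exact: kboundedM (kbounded_fst (r_bnd y)) (kboundedM r_kbounded (kbounded_snd wi_bnd)).
have -> : I (fun u => r y u * Rwi u) = I (fun u => I (fun t => r y u * (r u t * wi t))).
  apply: eq_Rintegral => u _; rewrite bmeas_RintegralZl//.
  exact: bmeasM (kbounded_bmeasl u mr r_kbounded) bmeas_wi.
rewrite (Rintegral_swap mF bF); apply: bmeas_le_Rintegral => [||t].
- exact: bmeas_Rintegral_section (kmeas_swap mF) (kbounded_swap bF).
- exact: bmeasM (bmeas_s y) bmeas_wi.
have -> : I (fun u => r y u * (r u t * wi t)) = I (fun u => r y u * r u t) * wi t.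
  rewrite -bmeas_RintegralZr; first by apply: eq_Rintegral => u _; rewrite mulrA.
  exact: bmeasM (kbounded_bmeasl y mr r_kbounded) (kbounded_bmeasr t mr r_kbounded).
by rewrite ler_wpM2r ?wi_ge0.
Qed.

Let RinvRwi y := I (fun x => r y x / Rwi x).

Lemma kmeas_r_invRwi : kmeas (fun y x => r y x / Rwi x).
Proof. exact: kmeasM mr (kmeas_snd measurable_invRwi). Qed.

Lemma kbounded_r_invRwi : kbounded (fun y x => r y x / Rwi x).
Proof. exact: kboundedM r_kbounded (kbounded_snd invRwi_bnd). Qed.

Lemma Rintegral_wi_RinvRwi : I (fun y => wi y * RinvRwi y) = 1.
Proof.
have mF : kmeas (fun y x => wi y * (r y x / Rwi x)).
  exact: kmeasM (kmeas_fst mwi) kmeas_r_invRwi.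
have bF : kbounded (fun y x => wi y * (r y x / Rwi x)).
  exact: kboundedM (kbounded_fst wi_bnd) kbounded_r_invRwi.
have -> : I (fun y => wi y * RinvRwi y) = I (fun y => I (fun x => wi y * (r y x / Rwi x))).
  apply: eq_Rintegral => y _; rewrite bmeas_RintegralZl//.
  exact: bmeasM (kbounded_bmeasl y mr r_kbounded) bmeas_invRwi.
rewrite (Rintegral_swap mF bF) -(@Rintegral_cst1 _ _ _ P 1); apply: eq_Rintegral => x _.
transitivity (Rwi x * (Rwi x)^-1); last by rewrite mulfV// gt_eqF ?Rwi_gt0.
rewrite -bmeas_RintegralZr; last exact: bmeasM (kbounded_bmeasl x mr r_kbounded) bmeas_wi.
by apply: eq_Rintegral => y _; rewrite r_sym; ring.
Qed.

(* Cauchy-Schwarz gives [(r 1)^2 <= r (1 / Rwi) * r Rwi], [s >= r * r] gives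
   [w2 * r Rwi <= w2 * Swi <= wi], and [<wi * r (1 / Rwi)> = 1] by symmetry of [r]. *)
Lemma Rintegral_w2_le : I w2 <= 1 / c ^+ 2.
Proof.
have bA : bmeas RinvRwi := bmeas_Rintegral_section kmeas_r_invRwi kbounded_r_invRwi.
have w2_bound y : c ^+ 2 * w2 y <= wi y * RinvRwi y.
  have r0 x : 0 <= r y x by have /andP[] := r_bnd y x.
  have A0 : 0 <= RinvRwi y.
    by apply: Rintegral_ge0 => x _; have /andP[V0 _] := invRwi_bnd x; rewrite mulr_ge0.
  have cs := Rintegral_weighted_cauchy_schwarz (P := P) (kbounded_bmeasl y mr r_kbounded)
    bmeas_Rwi bmeas_invRwi r0 Rwi_gt0.
  have c2 : c ^+ 2 <= I (r y) ^+ 2 by have := r_mass y; have := c_gt0; nra.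
  have w2y := ltW (w2_gt0 y).
  apply: le_trans (ler_wpM2r w2y (le_trans c2 cs)) _.
  rewrite -mulrA [wi y * _]mulrC ler_wpM2l// mulrC.
  exact: le_trans (ler_wpM2l w2y (R_Rwi_le_Swi y)) (w2_Swi_le y).
have := bmeas_le_Rintegral (P := P) (bmeasZ (c ^+ 2) bmeas_w2) (bmeasM bmeas_wi bA) w2_bound.
rewrite bmeas_RintegralZl; last exact: bmeas_w2.
rewrite Rintegral_wi_RinvRwi => h.
by rewrite ler_pdivlMr ?exprn_gt0// mulrC.
Qed.

End assumptionA.

Lemma sqr_Sop_sub_le (f : X -> R) x y : bmeas f ->
  (I (fun t => s y t * f t) - I (fun t => s x t * f t)) ^+ 2 <=
  I (fun t => (s x t - s y t) ^+ 2) * I (fun t => f t ^+ 2).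
Proof.
move=> bf; rewrite -(bmeas_RintegralB (bmeasM (bmeas_s y) bf) (bmeasM (bmeas_s x) bf)).
have -> : I (fun t => (s x t - s y t) ^+ 2) = I (fun t => (s y t - s x t) ^+ 2).
  by apply: eq_Rintegral => t _; rewrite -sqrrN opprB.
under eq_Rintegral => t _ do rewrite -mulrBl.
exact: Rintegral_cauchy_schwarz (bmeasB (bmeas_s y) (bmeas_s x)) bf.
Qed.

Lemma inv_w2_shift x y : 1 / w2 y <= 2 * (1 / w2 x) + 4 * (a x - a y) ^+ 2
  + 4 * (Swr y - Swr x) ^+ 2 + 2 * (Swi y - Swi x) ^+ 2.
Proof.
rewrite !inv_w2E.
have -> : complex.Re z + a y + Swr y =
    (complex.Re z + a x + Swr x) + (a y - a x) + (Swr y - Swr x) by ring.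
have -> : complex.Im z + Swi y = (complex.Im z + Swi x) + (Swi y - Swi x) by ring.
have := sqrD3_le (complex.Re z + a x + Swr x) (a y - a x) (Swr y - Swr x).
have := sqrD_le (complex.Im z + Swi x) (Swi y - Swi x).
by rewrite -[(a y - a x) ^+ 2]sqrrN opprB; lra.
Qed.

Section assumptionC.
Variable B : R.
Hypothesis Iw2_le : I w2 <= B.

Let K1 := 4 * Num.max 1 B.

Lemma inv_dispersion_le x y :
  (1 / w2 x + (a x - a y) ^+ 2 + I (fun u => (s x u - s y u) ^+ 2))^-1 <= K1 * w2 y.
Proof.
set beta := I (fun u => (s x u - s y u) ^+ 2).
have beta_ge0 : 0 <= beta by apply: Rintegral_ge0 => u _; exact: sqr_ge0.
have w2x := w2_gt0 x; have w2y := w2_gt0 y.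
have invw2x : 0 < 1 / w2 x by rewrite divr_gt0.
have := sqr_ge0 (a x - a y) => da_ge0.
have hRe : (Swr y - Swr x) ^+ 2 <= beta * I (fun t => wr t ^+ 2).
  exact: sqr_Sop_sub_le x y bmeas_wr.
have hIm : (Swi y - Swi x) ^+ 2 <= beta * I (fun t => wi t ^+ 2).
  exact: sqr_Sop_sub_le x y bmeas_wi.
have hB : I (fun t => wr t ^+ 2) + I (fun t => wi t ^+ 2) <= B.
  by rewrite -(bmeas_RintegralD (bmeas_sqr bmeas_wr) (bmeas_sqr bmeas_wi)).
have M1 : 1 <= Num.max 1 B by rewrite le_max lexx.
have MB : beta * I (fun t => wr t ^+ 2) + beta * I (fun t => wi t ^+ 2) <= beta * Num.max 1 B.
  by rewrite -mulrDr ler_wpM2l// (le_trans hB)// le_max lexx orbT.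
have hIm0 : 0 <= beta * I (fun t => wi t ^+ 2).
  by rewrite mulr_ge0// Rintegral_ge0// => t _; exact: sqr_ge0.
have E_gt0 : 0 < 1 / w2 x + (a x - a y) ^+ 2 + beta by lra.
have h : 1 / w2 y <= K1 * (1 / w2 x + (a x - a y) ^+ 2 + beta).
  have := inv_w2_shift x y.
  have : 1 / w2 x <= Num.max 1 B * (1 / w2 x) by rewrite ler_peMl// ltW.
  have : (a x - a y) ^+ 2 <= Num.max 1 B * (a x - a y) ^+ 2 by rewrite ler_peMl.
  rewrite /K1 -mulrA mulrDr mulrDr [_ * beta]mulrC; lra.
rewrite -div1r ler_pdivrMr//; rewrite ler_pdivrMr// in h.
by rewrite mulrAC.
Qed.

Lemma integral_inv_dispersion_le x :
  (\int[P]_y ((1 / w2 x + (a x - a y) ^+ 2 + mean P (fun u => (s x u - s y u) ^+ 2))^-1)%:E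
    <= (K1 * B)%:E)%E.
Proof.
apply: (@le_trans _ _ (\int[P]_y (K1 * w2 y)%:E)%E).
  apply: ge0_le_integral_any => y; rewrite lee_fin; last exact: inv_dispersion_le.
  rewrite invr_ge0 !addr_ge0 ?sqr_ge0 ?divr_ge0 ?(ltW (w2_gt0 x))//.
  by apply: Rintegral_ge0 => u _; exact: sqr_ge0.
rewrite -bmeas_RintegralE ?lee_fin; last exact: bmeasZ bmeas_w2.
rewrite bmeas_RintegralZl ?ler_wpM2l//; last exact: bmeas_w2.
by rewrite /K1 mulr_ge0// (le_trans ler01)// le_max lexx.
Qed.

(* Assumption (C) bounds [w2] from above: at a point where [1 / w2 x] is small, it
   would force the integral above to be large. *)
Lemma w2_le_of_dispersion del : 0 < del ->
  (forall eps, 0 < eps -> eps < del -> forall x,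
    ((K1 * B + 1)%:E <= \int[P]_(y in setT)
      ((eps + (a x - a y) ^+ 2 + mean P (fun u => (s x u - s y u) ^+ 2))^-1)%:E)%E) ->
  forall x, w2 x <= del^-1.
Proof.
move=> del_gt0 hdel x; have w2x := w2_gt0 x.
have [small|] := ltP (1 / w2 x) del.
  have := le_trans (hdel _ (divr_gt0 ltr01 w2x) small x) (integral_inv_dispersion_le x).
  by rewrite lee_fin; lra.
move=> big; rewrite -[del^-1]div1r ler_pdivlMr// mulrC.
by rewrite ler_pdivlMr// in big.
Qed.

End assumptionC.

Lemma cabs_w_le Kq C : (forall x, w2 x <= Kq) -> Kq <= C -> 1 <= C ->
  forall x, cabs (w x) <= C.
Proof.
move=> w2_le KqC C_ge1 x; have C_ge0 := le_trans ler01 C_ge1.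
rewrite cabsE -(ger0_norm C_ge0) -sqrtr_sqr ler_wsqrtr//.
by apply: le_trans (w2_le x) (le_trans KqC _); rewrite expr2 ler_peMl.
Qed.

Lemma Rintegral_kpowS_wi n x :
  I (fun y => kpow P s n.+1 x y * wi y) = I (fun u => kpow P s n x u * Swi u).
Proof.
have [mk bk] := kpow_meas_bound P ms s_bnd n.
have mF : kmeas (fun y u => kpow P s n x u * s u y * wi y).
  exact: kmeasM (kmeasM (kmeas_snd (mk x)) (kmeas_swap ms)) (kmeas_fst mwi).
have bF : kbounded (fun y u => kpow P s n x u * s u y * wi y).
  exact: kboundedM (kboundedM (kbounded_snd (bk x)) (kbounded_swap s_kbounded))
    (kbounded_fst wi_bnd).
have -> : I (fun y => kpow P s n.+1 x y * wi y) =
    I (fun y => I (fun u => kpow P s n x u * s u y * wi y)).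
  apply: eq_Rintegral => y _ /=; rewrite bmeas_RintegralZr//.
  exact: bmeasM (bmeas_kpow P ms s_bnd n x) (kbounded_bmeasr y ms s_kbounded).
rewrite (Rintegral_swap mF bF); apply: eq_Rintegral => u _.
rewrite -bmeas_RintegralZl; last exact: bmeasM (bmeas_s u) bmeas_wi.
by apply: eq_Rintegral => y _; ring.
Qed.

Section assumptionB.
Variable L : R.
Hypotheses (L_ge1 : 1 <= L) (w2_ge_L : forall x, 1 / L <= w2 x).

Let L_gt0 : 0 < L. Proof. exact: lt_le_trans ltr01 L_ge1. Qed.

Lemma one_le_C_cabs C : L <= C -> forall x, 1 <= C * cabs (w x).
Proof.
move=> LC x; have C_ge0 := le_trans (ltW L_gt0) LC; have w2x := ltW (w2_gt0 x).
rewrite cabsE -(ger0_norm C_ge0) -sqrtr_sqr -sqrtrM ?sqr_ge0// -sqrtr1 ler_wsqrtr//.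
have h : 1 <= L * w2 x by rewrite -ler_pdivrMl// mulrC w2_ge_L.
have C2 : L <= C ^+ 2 by have := le_trans L_ge1 LC; nra.
exact: le_trans h (ler_wpM2r w2x C2).
Qed.

Lemma Swi_le_wi u : 1 / L * Swi u <= wi u.
Proof. exact: le_trans (ler_wpM2r (Swi_ge0 u) (w2_ge_L u)) (w2_Swi_le u). Qed.

Lemma kpow_wi_le n x : (1 / L) ^+ n.+1 * I (fun y => kpow P s n x y * wi y) <= wi x.
Proof.
have iL_ge0 : 0 <= 1 / L by rewrite divr_ge0// ltW.
elim: n x => [|n IH] x; first by rewrite expr1 Swi_le_wi.
have bk := bmeas_kpow P ms s_bnd n x.
rewrite Rintegral_kpowS_wi exprSr -mulrA; apply: le_trans (IH x).
rewrite ler_wpM2l ?exprn_ge0// -bmeas_RintegralZl; last exact: bmeasM bk bmeas_Swi.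
apply: bmeas_le_Rintegral => [||u].
- exact: bmeasZ (bmeasM bk bmeas_Swi).
- exact: bmeasM bk bmeas_wi.
- have /andP[k0 _] := (kpow_meas_bound P ms s_bnd n).2 x u.
  by rewrite mulrCA ler_wpM2l ?Swi_le_wi.
Qed.

Lemma Rintegral_wi_le K cB : (0 < K)%N -> 0 < cB ->
  (forall x y, cB <= kpow P s K.-1 x y) -> forall y, I wi <= L ^+ K / cB * wi y.
Proof.
move=> K_gt0 cB_gt0 sK_ge y.
have := kpow_wi_le K.-1 y; rewrite prednK//.
set J := I (fun t => kpow P s K.-1 y t * wi t) => hJ.
have cJ : cB * I wi <= J.
  rewrite -bmeas_RintegralZl; last exact: bmeas_wi.
  apply: bmeas_le_Rintegral => [||t]; first exact: bmeasZ bmeas_wi.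
    exact: bmeasM (bmeas_kpow P ms s_bnd _ y) bmeas_wi.
  by rewrite ler_wpM2r ?wi_ge0.
have JL : J <= L ^+ K * wi y.
  by move: hJ; rewrite div1r exprVn mulrC ler_pdivrMr ?exprn_gt0// mulrC.
by rewrite mulrAC ler_pdivlMr// mulrC (le_trans cJ).
Qed.

Lemma Im_w_le Kq K cB : (forall x, w2 x <= Kq) -> (0 < K)%N -> 0 < cB ->
  (forall x y, cB <= kpow P s K.-1 x y) ->
  forall x y, wi x <= Kq * (L + sig * L ^+ K / cB) * wi y.
Proof.
move=> w2_le K_gt0 cB_gt0 sK_ge x y.
have Swi_le_Iwi : Swi x <= sig * I wi.
  rewrite -bmeas_RintegralZl; last exact: bmeas_wi.
  apply: bmeas_le_Rintegral => [||t]; [exact: bmeasM (bmeas_s x) bmeas_wi|exact: bmeasZ bmeas_wi|].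
  by have /andP[s0 sM] := s_bnd x t; rewrite ler_wpM2r ?wi_ge0.
have Iwi_le := Rintegral_wi_le K_gt0 cB_gt0 sK_ge y.
have Im_z_leL := Im_z_le L_gt0 w2_ge_L y.
rewrite wiE; apply: le_trans (ler_pM (ltW (w2_gt0 x)) _ (w2_le x) _) _.
- by rewrite addr_ge0 ?Swi_ge0// ltW.
- exact: lerD Im_z_leL (le_trans Swi_le_Iwi (ler_wpM2l sig_ge0 Iwi_le)).
have -> : Kq * (L * wi y + sig * (L ^+ K / cB * wi y)) =
  Kq * (L + sig * L ^+ K / cB) * wi y by ring.
by [].
Qed.

End assumptionB.

Lemma qve_solution_bounds (r : X -> X -> R) (rM c del kap cB : R) (K : nat) :
  kmeas r -> (forall x y, 0 <= r x y <= rM) -> (forall x y, r x y = r y x) ->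
  (forall x y, I (fun u => r x u * r u y) <= s x y) -> 0 < c ->
  (forall x, c <= I (r x)) -> 0 < del ->
  (forall eps, 0 < eps -> eps < del -> forall x,
    ((4 * Num.max 1 (1 / c ^+ 2) * (1 / c ^+ 2) + 1)%:E <= \int[P]_(y in setT)
      ((eps + (a x - a y) ^+ 2 + mean P (fun u => (s x u - s y u) ^+ 2))^-1)%:E)%E) ->
  cabs z <= kap -> (0 < K)%N -> 0 < cB -> (forall x y, cB <= kpow P s K.-1 x y) ->
  let C := qve_const sig del^-1 (qve_bound Ma sig kap (1 + del^-1)) cB K in
  (forall x, cabs (w x) <= C /\ 1 <= C * cabs (w x)) /\
  (forall x y, complex.Im (w x) <= C * complex.Im (w y)).
Proof.
move=> mr r_bnd r_sym r2_le c_gt0 r_mass del_gt0 hdel z_le K_gt0 cB_gt0 sK_ge C.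
have Iw2_le := Rintegral_w2_le mr r_bnd r_sym r2_le c_gt0 r_mass.
have w2_le := w2_le_of_dispersion Iw2_le del_gt0 hdel.
have L_ge1 := qve_bound_ge1 Ma sig kap (1 + del^-1).
have w2_geL := w2_ge_of_le z_le w2_le.
have Kq_ge0 : 0 <= del^-1 by rewrite invr_ge0 ltW.
have [C_ge1 KqC LC TC] := qve_const_ge K sig_ge0 Kq_ge0 L_ge1 cB_gt0.
split=> [x|x y]; first split.
- exact: cabs_w_le w2_le KqC C_ge1 x.
- exact: (one_le_C_cabs L_ge1 w2_geL LC x).
- apply: le_trans (Im_w_le L_ge1 w2_geL w2_le K_gt0 cB_gt0 sK_ge x y) _.
  by rewrite ler_wpM2r ?wi_ge0.
Qed.

End qve_solution.

Unset Implicit Arguments.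

Theorem mainTheorem4 (d : measure_display) (X : measurableType d)
  (R : realType) (P : probability X R)
  (a : X -> R) (s : X -> X -> R) (m : R[i] -> X -> R[i]) :
  (* a in B(X, R) *)
  measurable_fun setT a -> (exists M : R, forall x, `|a x| <= M) ->
  (* s in B(X^2, [0, oo)) symmetric *)
  good_kernel s ->
  (* m : H -> B(X, H) solves -1/m(z) = z + a + S m(z) *)
  (forall z : R[i], in_H z ->
     bounded_meas (m z) /\ (forall x, in_H (m z x)) /\
     (forall x, - (m z x)^-1 = z + (a x)%:C%C + Sop P s (m z) x)) ->
  assumptionA P s -> assumptionB P s -> assumptionC P a s ->
  exists C : R, 0 < C /\
    (forall (z : R[i]) (x : X), in_H z -> cabs z <= 2 * kappa P a s ->
        cabs (m z x) <= C /\ 1 <= C * cabs (m z x)) /\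
    (forall (z : R[i]) (x y : X), in_H z -> cabs z <= 2 * kappa P a s ->
        complex.Im (m z x) <= C * complex.Im (m z y)).
Proof.
move=> _ [Ma a_le] [ms [[Ms s_le] [s_ge0 _]]] hm.
move=> [r [[mr [[rM r_le] [r_ge0 r_sym]]] [r2_le [c [c_gt0 r_mass]]]]].
move=> [K [K_gt0 [cB [cB_gt0 sK_ge]]]] hC.
have s_bnd x y : 0 <= s x y <= Ms by rewrite s_ge0 (le_trans (ler_norm _)).
have r_bnd x y : 0 <= r x y <= rM by rewrite r_ge0 (le_trans (ler_norm _)).
have [del [del_gt0 hdel]] := hC (4 * Num.max 1 (1 / c ^+ 2) * (1 / c ^+ 2) + 1).
pose kap := 2 * kappa P a s.
have bounds z : in_H z -> cabs z <= kap ->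
    let C := qve_const Ms del^-1 (qve_bound Ma Ms kap (1 + del^-1)) cB K in
    (forall x, cabs (m z x) <= C /\ 1 <= C * cabs (m z x)) /\
    (forall x y, complex.Im (m z x) <= C * complex.Im (m z y)).
  move=> z_H z_le; have [[mwr [mwi [Mw w_le]]] [w_H qve]] := hm z z_H.
  exact: (qve_solution_bounds a_le ms s_bnd z_H mwr mwi w_le w_H qve mr r_bnd r_sym r2_le
    c_gt0 r_mass del_gt0 hdel z_le K_gt0 cB_gt0 sK_ge).
have Ms_ge0 := sig_ge0 s_bnd.
have Kq_ge0 : 0 <= del^-1 by rewrite invr_ge0 ltW.
have [C_ge1 _ _ _] :=
  qve_const_ge K Ms_ge0 Kq_ge0 (qve_bound_ge1 Ma Ms kap (1 + del^-1)) cB_gt0.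
exists (qve_const Ms del^-1 (qve_bound Ma Ms kap (1 + del^-1)) cB K).
split; first exact: lt_le_trans ltr01 C_ge1.
by split=> [z x|z x y] z_H z_le; have [hx hxy] := bounds z z_H z_le; [exact: hx|exact: hxy].
Qed.
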